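(* Let $U_1, \ldots, U_n$ be i.i.d. $\mathrm{Unif}([0, 1])$ with order statistics $U_{(1)}\le \ldots \le U_{(n)}$, and fix $\delta \in (0,1)$. Suppose $0\le b_1\le b_2\le \ldots \le b_{n}\le 1$ are reals such that \[\mathbb{P}\left[ U_{(1)}\le b_{1}, \ldots, U_{(n)}\le b_{n} \right] \ge 1 - \delta.\] Let $b_{0} = 0$, $b_{n+1} = 1$, and let $h: [0, 1]\to [0, 1]$ be the piecewise constant function $h(t) = b_{\lceil (n + 1)t\rceil}$, $t\in [0, 1]$. Define $\hat{u}^{\mathrm{(ccv)}} = h\circ \hat{u}^{\mathrm{(marg)}}$. Then, if $X_{2n+1}\sim P_X$ is independent of $\mathcal{D}$, \[\mathbb{P}\left[ \mathbb{P}\left[ \hat{u}^{\mathrm{(ccv)}}(X_{2n+1}) \leq t \mid \mathcal{D} \right] \leq t \text{ for all } t \in (0,1) \right] \geq 1-\delta.\]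
   Context: Setting: $P_X$ is a distribution on $\mathbb{R}^d$. Data $X_1,\dots,X_{2n}$ are i.i.d. from $P_X$; $\mathcal{D}^{\mathrm{train}}=\{X_1,\dots,X_n\}$ is treated as fixed (all probabilities conditional on it), $\mathcal{D}^{\mathrm{cal}}=\{X_{n+1},\dots,X_{2n}\}$, $\mathcal{D}=\mathcal{D}^{\mathrm{train}}\cup\mathcal{D}^{\mathrm{cal}}$. The score $\hat s:\mathbb{R}^d\to\mathbb{R}$ is a fixed function determined by $\mathcal{D}^{\mathrm{train}}$. Marginal conformal p-value: $\hat{u}^{\mathrm{(marg)}}(x) = \frac{1 + |\{i \in \{n+1,\dots,2n\} : \hat{s}(X_i) \le \hat{s}(x)\}|}{n+1}$. *)

From HB Require Import structures.
From mathcomp Require Import all_boot all_order all_algebra.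
From mathcomp Require Import all_classical all_reals all_analysis.
Set Implicit Arguments. Unset Strict Implicit. Unset Printing Implicit Defensive.
Import Order.TTheory GRing.Theory Num.Theory.
Local Open Scope classical_set_scope.
Local Open Scope ring_scope.

(* Mutual independence of a finite family of random variables X_0,...,X_{n-1}:
   the joint law is the product of the marginals on measurable rectangles
   (taking A i = setT recovers every subfamily). *)
Definition mutual_indep (dO dT : measure_display) (Omega : measurableType dO)
  (T : measurableType dT) (R : realType) (P : probability Omega R) (n : nat)
  (X : 'I_n -> Omega -> T) : Prop :=
  forall A : 'I_n -> set T, (forall i, measurable (A i)) ->
    P (\bigcap_(i in [set: 'I_n]) (X i @^-1` A i)) =
    (\prod_(i < n) P (X i @^-1` A i))%E.

(* k-th order statistic (k = 1..n, 1-based) of the values u_0,...,u_{n-1}. *)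
Definition ostat (R : realType) (n : nat) (u : 'I_n -> R) (k : nat) : R :=
  nth 0 (sort <=%R (map u (enum 'I_n))) k.-1.

(* Marginal conformal p-value: (1 + #{i : s(X_i) <= s(x)}) / (n+1),
   with cal i = X_{n+1+i} the calibration points. *)
Definition umarg (R : realType) (T : Type) (n : nat) (s : T -> R)
  (cal : 'I_n -> T) (x : T) : R :=
  (1 + count (fun i => s (cal i) <= s x) (enum 'I_n))%:R / n.+1%:R.

Definition hfun (R : realType) (n : nat) (b : nat -> R) (t : R) : R :=
  b (absz (Num.ceil (n.+1%:R * t))).

(* Let S_(1) <= ... <= S_(n) be the calibration scores s(X_i) and
   F v := PX(s < v). The good calibration event E says that F(S_(k)) <= b_k
   for every k, i.e. that at least k scores lie in the downset {F <= b_k}.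

   On E the bound is deterministic: if h(u(x)) <= t, then fewer than K scores
   are <= s(x), where K is the largest index with b_K <= t; hence s(x) < S_(K)
   and PX(h o u <= t) <= F(S_(K)) <= b_K <= t.

   To bound P(E), let C_k := {x | F(s x) <= b_k}; continuity from above of PX
   gives q_k := PX(C_k) >= b_k. Since the C_k are nested, E only depends on the
   independent finite-valued levels of the X_i relative to (C_k), which have
   the same joint law as the levels of the U_i relative to ({u <= q_k}).
   So P(E) = Q(U_(k) <= q_k for all k) >= Q(U_(k) <= b_k for all k). *)

From HB Require Import structures.
From mathcomp Require Import all_boot all_order all_algebra.
From mathcomp Require Import all_classical all_reals all_analysis.
From mathcomp Require Import measurable_realfun.
Import Order.TTheory GRing.Theory Num.Theory.
Local Open Scope classical_set_scope.
Local Open Scope ring_scope.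
Set Implicit Arguments. Unset Strict Implicit.

(** * Order statistics *)

Lemma sorted_nth_le_count d (T : orderType d) (x0 c : T) (s : seq T) (i : nat) :
  sorted <=%O s -> (i < size s)%N ->
  (nth x0 s i <= c)%O = (i < count (fun x => x <= c)%O s)%N.
Proof.
elim: s i => [|x s IH] i //= sorted_xs.
have x_le_s : all (fun y => x <= y)%O s := order_path_min le_trans sorted_xs.
case: (leP x c) => [xc|cx].
  case: i => [|i] /=; first by rewrite xc add1n.
  by rewrite add1n ltnS => i_lt; apply: IH => //; exact: path_sorted sorted_xs.
have -> : count (fun y => y <= c)%O s = 0%N.
  apply/eqP; rewrite -leqn0 leqNgt -has_count; apply/hasPn => y ys /=.
  by rewrite -ltNge (lt_le_trans cx) //; exact: (allP x_le_s).
case: i => [|i] /= i_lt; first by rewrite leNgt cx.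
rewrite leNgt (lt_le_trans cx) //; apply: (allP x_le_s); exact: mem_nth.
Qed.

Lemma ostat_le_count (R : realType) n (u : 'I_n -> R) (k : nat) (c : R) :
  (0 < k <= n)%N ->
  (ostat u k <= c) = (k <= count (fun i => (u i <= c)%R) (enum 'I_n))%N.
Proof.
case/andP => k_gt0 k_le_n; rewrite /ostat sorted_nth_le_count.
- by rewrite (permP (permEl (perm_sort _ _))) count_map prednK.
- exact/sort_sorted/le_total.
- by rewrite size_sort size_map size_enum_ord prednK.
Qed.

Lemma ostat_mem_downset (R : realType) n (u : 'I_n -> R) (k : nat) (D : set R) :
  (forall x y, y <= x -> D x -> D y) -> (0 < k)%N ->
  (k <= count (fun i => u i \in D) (enum 'I_n))%N -> D (ostat u k).
Proof.
move=> downD k_gt0 k_le_cnt.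
have /hasP[i0 _ Di0] : has (fun i => u i \in D) (enum 'I_n).
  by rewrite has_count (leq_trans k_gt0).
have [i Di max_i] := @arg_maxP _ _ _ i0 (fun i => u i \in D) u Di0.
have k_le_n : (k <= n)%N.
  by rewrite (leq_trans k_le_cnt) // (leq_trans (count_size _ _)) ?size_enum_ord.
apply: (downD (u i)); last by rewrite -in_setE.
rewrite ostat_le_count ?k_gt0 //; apply: (leq_trans k_le_cnt).
by apply: sub_count => j /max_i.
Qed.

(** * Levels relative to a nested family of sets *)

Lemma count_iota_predC_lt (p : pred nat) (n k : nat) :
  (forall i j, (0 < i <= j)%N -> (j <= n)%N -> p i -> p j) -> (0 < k <= n)%N ->
  (count (predC p) (iota 1 n) < k)%N = p k.
Proof.
move=> p_mono /andP[k_gt0 k_le_n].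
rewrite -(subnKC k_le_n) iotaD count_cat add1n.
have [pk|npk] := boolP (p k).
  have -> : count (predC p) (iota k.+1 (n - k)) = 0%N.
    apply/eqP; rewrite -leqn0 leqNgt -has_count; apply/hasPn => j.
    rewrite mem_iota /= negbK => /andP[kj jn]; apply: (p_mono k) => //.
      by rewrite k_gt0 ltnW.
    by rewrite -ltnS (leq_trans jn) // addSn subnKC.
  rewrite addn0 -[X in (_ < X)%N](size_iota 1 k) -(count_predC p).
  rewrite -[X in (X < _)%N]add0n ltn_add2r -has_count.
  by apply/hasP; exists k; rewrite // mem_iota k_gt0 add1n ltnSn.
have -> : count (predC p) (iota 1 k) = k.
  rewrite (eq_in_count (a2 := predT)) ?count_predT ?size_iota // => j.
  rewrite mem_iota add1n ltnS => /andP[j_gt0 jk] /=.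
  by apply: contraNN npk; apply: p_mono; rewrite ?j_gt0.
by rewrite ltnNge leq_addr.
Qed.

(* For nested C, this is the least k < n such that y \in C k.+1, or n if
   there is none; see level_ltE. *)
Definition level {T : Type} (n : nat) (C : nat -> set T) (y : T) : 'I_n.+1 :=
  inord (count (fun k => y \notin C k) (iota 1 n)).

Section level.
Variables (T : Type) (n : nat) (C : nat -> set T).
Hypothesis C_mono : forall i j, (0 < i <= j)%N -> (j <= n)%N -> C i `<=` C j.

Lemma level_ltE (y : T) (k : nat) :
  (0 < k <= n)%N -> (level n C y < k)%N = (y \in C k).
Proof.
move=> k_range; rewrite /level inordK; last first.
  by rewrite ltnS (leq_trans (count_size _ _)) ?size_iota.
apply: (@count_iota_predC_lt (fun k => y \in C k)) => // i j ij jn.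
by rewrite !in_setE; exact: C_mono.
Qed.

Lemma level_lt_set (j : nat) : [set y | (level n C y < j)%N] =
  if j == 0%N then set0 else if (j <= n)%N then C j else setT.
Proof.
apply/seteqP; split => y /=; case: ifPn => [/eqP->|j_neq0] //;
  case: ifPn => [j_le_n|j_gt_n] //.
1,2: by rewrite level_ltE ?lt0n ?j_neq0 // in_setE.
by move=> _; rewrite (leq_trans (ltn_ord _)) // ltnNge.
Qed.

End level.

(** * Left tails of a score *)

Section downset.
Variables (R : realType) (D : set R).
Hypothesis downD : forall x y, y <= x -> D x -> D y.

Lemma measurable_downset : measurable D.
Proof.
by apply: is_interval_measurable => x y _ Dy z /andP[_ zy]; exact: downD _ _ zy Dy.
Qed.

Lemma downset_lt_seq : D != setT ->
  exists u : nat -> R, [/\ {homo u : m k / (m <= k)%N >-> k <= m},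
    forall m, ~ D (u m) & forall y, (forall m, y < u m) -> D y].
Proof.
move=> DT; have [D0|/set0P[x0 Dx0]] := eqVneq D set0.
  exists (fun m => - m%:R); split; first by move=> m k mk; rewrite lerN2 ler_nat.
    by move=> m; rewrite D0.
  move=> y /(_ (Num.bound `|y|)); rewrite ltrNr.
  by move=> /(lt_trans (archi_boundP (normr_ge0 y))); rewrite ltNge ler_normr lexx orbT.
have [z nDz] : exists z, ~ D z.
  by apply/existsNP => allD; move/eqP: DT; apply; apply/seteqP; split.
have supD : has_sup D.
  split; first by exists x0.
  exists z => x Dx; rewrite leNgt; apply/negP => zx.
  by apply: nDz; exact: downD _ _ (ltW zx) Dx.
have [Dv|nDv] := pselect (D (sup D)).
  exists (fun m => sup D + m.+1%:R^-1); split.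
  - by move=> m k mk; rewrite lerD2l lef_pV2 ?posrE // ler_nat.
  - move=> m /(sup_upper_bound supD); rewrite gerDl leNgt => /negP; apply.
    by rewrite invr_gt0.
  - move=> y yv; apply: downD _ _ _ Dv; rewrite leNgt; apply/negP => /ltr_add_invr[m].
    by rewrite ltNge (ltW (yv m)).
exists (fun=> sup D); split => // y ysup.
have [e De] : exists2 e, D e & sup D - (sup D - y) < e.
  by apply: sup_adherent supD; rewrite subr_gt0; exact: ysup 0%N.
by rewrite opprB addrCA subrr addr0 => /ltW ye; exact: downD _ _ ye De.
Qed.

End downset.

Lemma probability_bigcap_ge d (T : measurableType d) (R : realType)
    (P : probability T R) (F : nat -> set T) (c : \bar R) :
  (forall m, measurable (F m)) -> {homo F : m k / (m <= k)%N >-> k `<=` m} ->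
  (forall m, c <= P (F m))%E -> (c <= P (\bigcap_m F m))%E.
Proof.
move=> mF F_dec cF.
have cvgF : (P \o F) @ \oo --> P (\bigcap_m F m).
  apply: nonincreasing_cvg_mu => //.
  - by rewrite (le_lt_trans (probability_le1 _ _)) ?ltry.
  - exact: bigcapT_measurable.
  - by move=> m k mk; apply/subsetPset/F_dec.
rewrite -(cvg_lim _ cvgF) //; apply: lime_ge; [exact: cvgP cvgF | exact: nearW].
Qed.

Definition ltail {d} {T : measurableType d} {R : realType} (PX : probability T R)
    (s : T -> R) (c : R) : set R :=
  [set v | (PX [set x | (s x < v)%R] <= c%:E)%E].

Section ltail.
Variables (d : measure_display) (T : measurableType d) (R : realType).
Variables (PX : probability T R) (s : T -> R).
Hypothesis ms : measurable_fun setT s.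

Lemma measurable_preimage (B : set R) : measurable B -> measurable (s @^-1` B).
Proof. by move=> mB; rewrite -[_ @^-1` _]setTI; exact: ms. Qed.

Lemma measurable_lt v : measurable [set x | s x < v].
Proof.
have -> : [set x | s x < v] = s @^-1` `]-oo, v[.
  by apply/seteqP; split => x /=; rewrite in_itv.
by apply: measurable_preimage; exact: measurable_itv.
Qed.

Lemma ltail_downset c v v' : v' <= v -> ltail PX s c v -> ltail PX s c v'.
Proof.
move=> v'v; apply: le_trans; apply: le_measure; rewrite ?inE.
- exact: measurable_lt.
- exact: measurable_lt.
- by move=> x /= /lt_le_trans; apply.
Qed.

Lemma measurable_ltail c : measurable (ltail PX s c).
Proof. by apply: measurable_downset => v v'; exact: ltail_downset. Qed.

Lemma ltail_sub c c' : c <= c' -> ltail PX s c `<=` ltail PX s c'.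
Proof. by move=> cc' v /le_trans; apply; rewrite lee_fin. Qed.

Lemma probability_ltail_ge c : c <= 1 -> (c%:E <= PX (s @^-1` ltail PX s c))%E.
Proof.
move=> c_le1; have [->|LT] := eqVneq (ltail PX s c) setT.
  by rewrite preimage_setT probability_setT lee_fin.
have [u [u_dec u_out u_in]] := downset_lt_seq (@ltail_downset c) LT.
apply: (@le_trans _ _ (PX (\bigcap_m [set x | s x < u m]))).
  apply: probability_bigcap_ge => [m|m k mk x /=|m]; first exact: measurable_lt.
    by move/lt_le_trans; apply; exact: u_dec.
  by apply/ltW; rewrite ltNge; apply/negP; exact: u_out.
apply: le_measure; rewrite ?inE; last by move=> x xu; apply: u_in => m; exact: xu.
- by apply: bigcapT_measurable => m; exact: measurable_lt.
- by apply: measurable_preimage; exact: measurable_ltail.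
Qed.

End ltail.

Lemma uniform_prob_le (R : realType) (p : R) : 0 <= p <= 1 ->
  uniform_prob (@ltr01 R) [set u | u <= p] = p%:E.
Proof.
move=> /andP[p_ge0 p_le1]; rewrite /uniform_prob integral_uniform_pdf.
have -> : [set u | u <= p] `&` `[0, 1] = `[0, p]%classic.
  apply/seteqP; split => x /=; rewrite !in_itv /=; first by case => xp /andP[-> _].
  by move=> /andP[-> xp]; split => //; exact: le_trans p_le1.
rewrite (eq_integral (fun=> 1%:E)); last first.
  move=> x; rewrite inE /= in_itv /= => /andP[x_ge0 xp].
  by rewrite /uniform_pdf x_ge0 (le_trans xp p_le1) subr0 invr1.
rewrite integral_cst //= mul1e lebesgue_measure_itv /= lte_fin.
by case: ltP => [_|]; [rewrite sube0 | move=> p_le0; rewrite (@le_anti _ _ p 0) ?p_le0].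
Qed.

(** * Independent finite-valued vectors *)

Definition indep_fibers {d} {O : measurableType d} {R : realType}
    (P : probability O R) {n : nat} {F : finType} (f : 'I_n -> O -> F) : Prop :=
  forall l : {ffun 'I_n -> F},
    P (\bigcap_(i in [set: 'I_n]) f i @^-1` [set l i]) =
    (\prod_(i < n) P (f i @^-1` [set l i]))%E.

Lemma mutual_indep_fibers dO dT (O : measurableType dO) (T : measurableType dT)
    (R : realType) (P : probability O R) n (X : 'I_n -> O -> T) (F : finType)
    (h : T -> F) :
  mutual_indep P X -> (forall a, measurable (h @^-1` [set a])) ->
  indep_fibers P (fun i => h \o X i).
Proof. by move=> indX mh l; exact: (indX (fun i => h @^-1` [set l i])). Qed.

Section finite_vectors.
Variables (d : measure_display) (O : measurableType d) (n : nat) (F : finType).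
Variable f : 'I_n -> O -> F.
Hypothesis mf : forall i a, measurable (f i @^-1` [set a]).

Let vec w := [ffun i => f i w].

Let vec_fiberE l :
  vec @^-1` [set l] = \bigcap_(i in [set: 'I_n]) f i @^-1` [set l i].
Proof.
apply/seteqP; split => w /=; first by move=> <- i _; rewrite /vec ffunE.
by move=> fl; apply/ffunP => i; rewrite ffunE; exact: fl.
Qed.

Let measurable_vec_fiber l : measurable (vec @^-1` [set l]).
Proof. by rewrite vec_fiberE; apply: fin_bigcap_measurable => // i _. Qed.

Let vec_predE (D : pred {ffun 'I_n -> F}) :
  [set w | D (vec w)] = \bigcup_(l in [set l | D l]) vec @^-1` [set l].
Proof.
apply/seteqP; split => w /=; first by move=> Dw; exists (vec w).
by case=> l Dl /= ->.
Qed.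

Lemma measurable_ffun_pred (D : pred {ffun 'I_n -> F}) :
  measurable [set w | D [ffun i => f i w]].
Proof.
rewrite -/(vec _) vec_predE.
apply: fin_bigcup_measurable => [|l _]; first exact: finite_finset.
exact: measurable_vec_fiber.
Qed.

Lemma measure_ffun_pred (R : realType) (P : probability O R)
    (D : pred {ffun 'I_n -> F}) :
  P [set w | D [ffun i => f i w]] =
  (\sum_(l \in [set l | D l]) P (\bigcap_(i in [set: 'I_n]) f i @^-1` [set l i]))%E.
Proof.
rewrite -/(vec _) vec_predE measure_fin_bigcup //.
- by apply: eq_fsbigr => l _; rewrite vec_fiberE.
- exact: finite_finset.
- exact: trivIset_preimage1.
Qed.

End finite_vectors.

Lemma indep_ffun_pred_eq d1 d2 (O1 : measurableType d1) (O2 : measurableType d2)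
    (R : realType) (P1 : probability O1 R) (P2 : probability O2 R) n (F : finType)
    (f : 'I_n -> O1 -> F) (g : 'I_n -> O2 -> F) :
  (forall i a, measurable (f i @^-1` [set a])) ->
  (forall i a, measurable (g i @^-1` [set a])) ->
  indep_fibers P1 f -> indep_fibers P2 g ->
  (forall i a, P1 (f i @^-1` [set a]) = P2 (g i @^-1` [set a])) ->
  forall D : pred {ffun 'I_n -> F},
  P1 [set w | D [ffun i => f i w]] = P2 [set w | D [ffun i => g i w]].
Proof.
move=> mf mg indf indg fg D; rewrite !measure_ffun_pred //.
by apply: eq_fsbigr => l _; rewrite indf indg; apply: eq_bigr => i _; exact: fg.
Qed.

Section ordinal_law.
Variables (d : measure_display) (T : measurableType d) (m : nat) (h : T -> 'I_m).

Let preimage1_ltE (a : 'I_m) :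
  h @^-1` [set a] = [set y | (h y < a.+1)%N] `\` [set y | (h y < a)%N].
Proof.
apply/seteqP; split => y /=; first by move=> ->; rewrite ltnn ltnSn.
by rewrite ltnS leq_eqVlt => -[/orP[/eqP/val_inj|]].
Qed.

Hypothesis mh : forall j, measurable [set y | (h y < j)%N].

Lemma measurable_preimage1_ord a : measurable (h @^-1` [set a]).
Proof. by rewrite preimage1_ltE; exact: measurableD. Qed.

Lemma probability_preimage1_ord (R : realType) (P : probability T R) a :
  P (h @^-1` [set a]) =
  (P [set y | (h y < a.+1)%N] - P [set y | (h y < a)%N])%E.
Proof.
rewrite preimage1_ltE measureD //; last first.
  by rewrite (le_lt_trans (probability_le1 _ _)) ?ltry.
by congr (_ - P _)%E; apply/setIidr => y /= /ltnW.
Qed.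

End ordinal_law.

(* For downsets C k of R, this is the event that the k-th order statistic
   lies in C k for every k: see ostat_le_count and ostat_mem_downset. *)
Definition count_event {T S : Type} {n : nat} (Y : 'I_n -> T -> S)
    (C : nat -> set S) : set T :=
  [set w | forall k : 'I_n, (k.+1 <= count (fun i => Y i w \in C k.+1) (enum 'I_n))%N].

Lemma count_event_sub (T S : Type) n (Y : 'I_n -> T -> S) (C1 C2 : nat -> set S) :
  (forall k : 'I_n, C1 k.+1 `<=` C2 k.+1) -> count_event Y C1 `<=` count_event Y C2.
Proof.
move=> C12 w Yw k; apply: leq_trans (Yw k) _; apply: sub_count => i /=.
by move=> /set_mem/C12/mem_set.
Qed.

Section count_event.
Variables (d : measure_display) (T : measurableType d) (n : nat).
Variables (dS : measure_display) (S : measurableType dS) (C : nat -> set S).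
Hypothesis C_mono : forall i j, (0 < i <= j)%N -> (j <= n)%N -> C i `<=` C j.
Hypothesis mC : forall k, measurable (C k).

Lemma measurable_level_lt j : measurable [set y | (level n C y < j)%N].
Proof. by rewrite level_lt_set //; case: ifP => _ //; case: ifP. Qed.

Definition level_event (l : {ffun 'I_n -> 'I_n.+1}) :=
  [forall k : 'I_n, (k.+1 <= count (fun i => l i < k.+1) (enum 'I_n))%N].

Lemma count_event_level (Y : 'I_n -> T -> S) :
  count_event Y C = [set w | level_event [ffun i => level n C (Y i w)]].
Proof.
apply/seteqP; split => w /=.
  move=> cY; apply/forallP => k; rewrite (eq_count (a2 := fun i => Y i w \in C k.+1)) //.
  by move=> i; rewrite ffunE level_ltE ?ltn_ord.
move/forallP => cY k; have := cY k.
rewrite (eq_count (a2 := fun i => Y i w \in C k.+1)) // => i.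
by rewrite ffunE level_ltE ?ltn_ord.
Qed.

Lemma measurable_level_fiber (a : 'I_n.+1) : measurable (level n C @^-1` [set a]).
Proof. by apply: measurable_preimage1_ord; exact: measurable_level_lt. Qed.

Lemma measurable_count_event (Y : 'I_n -> {mfun T >-> S}) :
  measurable (count_event (fun i => Y i : T -> S) C).
Proof.
rewrite count_event_level; apply: measurable_ffun_pred => i a.
exact: (measurable_funPTI (Y i) (measurable_level_fiber a)).
Qed.

Lemma probability_level_lt (R : realType) (P : probability T R)
    (Y : {mfun T >-> S}) j :
  P [set w | (level n C (Y w) < j)%N] =
  if j == 0%N then 0%E else if (j <= n)%N then P (Y @^-1` C j) else 1%E.
Proof.
rewrite -[[set w | _]]/(Y @^-1` [set y | (level n C y < j)%N]) level_lt_set //.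
case: ifP => _; first by rewrite preimage_set0 measure0.
by case: ifP => _ //; rewrite preimage_setT probability_setT.
Qed.

End count_event.

Lemma probability_count_event_eq (R : realType) d1 d2 dS1 dS2
    (O1 : measurableType d1) (O2 : measurableType d2)
    (S1 : measurableType dS1) (S2 : measurableType dS2)
    (P1 : probability O1 R) (P2 : probability O2 R) (n : nat)
    (Y : 'I_n -> {mfun O1 >-> S1}) (Z : 'I_n -> {mfun O2 >-> S2})
    (C1 : nat -> set S1) (C2 : nat -> set S2) :
  (forall i j, (0 < i <= j)%N -> (j <= n)%N -> C1 i `<=` C1 j) ->
  (forall i j, (0 < i <= j)%N -> (j <= n)%N -> C2 i `<=` C2 j) ->
  (forall k, measurable (C1 k)) -> (forall k, measurable (C2 k)) ->
  mutual_indep P1 (fun i => Y i : O1 -> S1) ->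
  mutual_indep P2 (fun i => Z i : O2 -> S2) ->
  (forall i k, (0 < k <= n)%N -> P1 (Y i @^-1` C1 k) = P2 (Z i @^-1` C2 k)) ->
  P1 (count_event (fun i => Y i : O1 -> S1) C1) =
  P2 (count_event (fun i => Z i : O2 -> S2) C2).
Proof.
(* Both events are read off the independent levels of the Y i (resp. Z i),
   whose laws are determined by the probabilities P1 (Y i @^-1` C1 k). *)
move=> C1_mono C2_mono mC1 mC2 indY indZ YZ.
have level_lawE i j : P1 [set w | (level n C1 (Y i w) < j)%N] =
                      P2 [set w | (level n C2 (Z i w) < j)%N].
  rewrite !probability_level_lt //; case: ifP => // j_neq0.
  by case: ifP => // j_le_n; apply: YZ; rewrite lt0n j_neq0.
rewrite !count_event_level //; apply: indep_ffun_pred_eq => [i a|i a|||i a].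
- exact: (measurable_funPTI (Y i) (measurable_level_fiber C1_mono mC1 a)).
- exact: (measurable_funPTI (Z i) (measurable_level_fiber C2_mono mC2 a)).
- by apply: mutual_indep_fibers => // a; exact: measurable_level_fiber.
- by apply: mutual_indep_fibers => // a; exact: measurable_level_fiber.
- have mY j := measurable_funPTI (Y i) (measurable_level_lt C1_mono mC1 j).
  have mZ j := measurable_funPTI (Z i) (measurable_level_lt C2_mono mC2 j).
  by rewrite (probability_preimage1_ord mY) (probability_preimage1_ord mZ) !level_lawE.
Qed.

(** * Conformal calibration *)

Lemma hfun_umarg (R : realType) (T : Type) n (b : nat -> R) (s : T -> R)
    (cal : 'I_n -> T) (x : T) :
  hfun n b (umarg s cal x) =
  b (1 + count (fun i => (s (cal i) <= s x)%R) (enum 'I_n))%N.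
Proof.
by rewrite /hfun /umarg mulrC divfK ?pnatr_eq0 // pmulrn intrKceil.
Qed.

Lemma homo_leq_upto d (T : porderType d) (f : nat -> T) (m : nat) :
  (forall k, (k < m)%N -> (f k <= f k.+1)%O) ->
  forall i j, (i <= j <= m)%N -> (f i <= f j)%O.
Proof.
move=> f_step i j /andP[]; elim: j => [|j IH]; first by rewrite leqn0 => /eqP->.
rewrite leq_eqVlt => /orP[/eqP-> //|ij] jm.
exact: le_trans (IH ij (ltnW jm)) (f_step _ jm).
Qed.

Section conformal.
Variables (dT : measure_display) (T : measurableType dT) (R : realType).
Variables (PX : probability T R) (s : T -> R) (n : nat) (b : nat -> R).
Hypothesis ms : measurable_fun setT s.
Hypothesis b_step : forall k, (k <= n)%N -> b k <= b k.+1.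
Hypothesis b0 : b 0%N = 0.
Hypothesis bn1 : b n.+1 = 1.

Let b_mono : forall i j, (i <= j <= n.+1)%N -> b i <= b j :=
  homo_leq_upto (m := n.+1) b_step.

Lemma coverage_le (S : 'I_n -> R) (t : R) : 0 < t < 1 ->
  (forall k : 'I_n,
     (k.+1 <= count (fun i => S i \in ltail PX s (b k.+1)) (enum 'I_n))%N) ->
  (PX [set x | (b (1 + count (fun i => (S i <= s x)%R) (enum 'I_n))%N <= t)%R]
   <= t%:E)%E.
Proof.
move=> /andP[t_gt0 t_lt1] S_ltail.
pose cnt v := count (fun i => S i <= v) (enum 'I_n).
have cnt_le_n v : (cnt v <= n)%N.
  by rewrite (leq_trans (count_size _ _)) ?size_enum_ord.
have cnt_mono v v' : v <= v' -> (cnt v <= cnt v')%N.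
  by move=> vv'; apply: sub_count => i /= /le_trans; apply.
set A := [set x | _].
have mA : measurable A.
  apply: (measurable_preimage ms (B := [set v | b (1 + cnt v)%N <= t])).
  apply: measurable_downset => v v' v'v /=; apply: le_trans; apply: b_mono.
  by rewrite leq_add2l cnt_mono //= ltnS cnt_le_n.
have b_le_t0 : exists j, (j <= n)%N && (b j <= t) by exists 0%N; rewrite b0 ltW.
have le_n j : (j <= n)%N && (b j <= t) -> (j <= n)%N by case/andP.
have [K /andP[K_le_n bK_le_t] K_max] := ex_maxnP b_le_t0 le_n.
have A_sub : A `<=` [set x | (cnt (s x) < K)%N].
  move=> x Ax; have bx : b (cnt (s x)).+1 <= t := Ax.
  have cnt_lt_n : (cnt (s x) < n)%N.
    rewrite ltn_neqAle cnt_le_n andbT; apply/eqP => cnt_n.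
    by move: bx; rewrite cnt_n bn1 leNgt t_lt1.
  by apply: K_max; rewrite cnt_lt_n bx.
case: K A_sub K_le_n bK_le_t {K_max} => [|k] A_sub k_lt_n bk_le_t.
  have -> : A = set0 by apply/seteqP; split => x // /A_sub.
  by rewrite measure0 lee_fin ltW.
have v_ltail : ltail PX s (b k.+1) (ostat S k.+1).
  apply: ostat_mem_downset (S_ltail (Ordinal k_lt_n)) => //.
  exact: ltail_downset.
have A_lt : A `<=` [set x | s x < ostat S k.+1].
  by move=> x /A_sub /= cnt_lt; rewrite ltNge ostat_le_count ?k_lt_n // -ltnNge.
have mlt := measurable_lt ms (ostat S k.+1).
apply: le_trans (@le_measure _ _ _ PX _ _ (mem_set mA) (mem_set mlt) A_lt) _.
by apply: le_trans v_ltail _; rewrite lee_fin.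
Qed.

Variables (dO : measure_display) (Omega : measurableType dO) (P : probability Omega R).
Variable X : 'I_n -> {RV P >-> T}.
Variables (dU : measure_display) (OmegaU : measurableType dU) (Q : probability OmegaU R).
Variable U : 'I_n -> {RV Q >-> R}.
Hypothesis lawX : forall i A, measurable A -> P (X i @^-1` A) = PX A.
Hypothesis indX : mutual_indep P (fun i => (X i : Omega -> T)).
Hypothesis lawU :
  forall i A, measurable A -> Q (U i @^-1` A) = uniform_prob (@ltr01 R) A.
Hypothesis indU : mutual_indep Q (fun i => (U i : OmegaU -> R)).

Let C k := s @^-1` ltail PX s (b k).
Let q k := fine (PX (C k)).

Let measurable_C k : measurable (C k).
Proof. by apply: measurable_preimage ms _ _; exact: measurable_ltail. Qed.

Let C_mono i j : (0 < i <= j)%N -> (j <= n)%N -> C i `<=` C j.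
Proof.
move=> /andP[_ ij] jn; apply: preimage_subset; apply: ltail_sub.
by apply: b_mono; rewrite ij ltnW.
Qed.

Let qE k : (q k)%:E = PX (C k).
Proof. by rewrite /q fineK // fin_num_measure. Qed.

Let q01 k : 0 <= q k <= 1.
Proof. by rewrite -!lee_fin qE measure_ge0 probability_le1. Qed.

Let q_mono i j : (0 < i <= j)%N -> (j <= n)%N -> q i <= q j.
Proof.
move=> ij jn; rewrite -lee_fin !qE.
by apply: le_measure; rewrite ?inE //; exact: C_mono.
Qed.

Let b_le_q k : (k <= n.+1)%N -> b k <= q k.
Proof.
move=> kn; rewrite -lee_fin qE; apply: probability_ltail_ge => //.
by rewrite -bn1; apply: b_mono; rewrite kn leqnn.
Qed.

Lemma measurable_ltail_count_event :
  measurable (count_event (fun i => X i : Omega -> T) C).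
Proof. exact: measurable_count_event C_mono measurable_C X. Qed.

Lemma probability_ltail_count_event_ge :
  (Q [set w | forall k : 'I_n, (ostat (fun i => U i w) k.+1 <= b k.+1)%R] <=
   P (count_event (fun i => X i : Omega -> T) C))%E.
Proof.
pose Cb k := [set u : R | u <= b k].
pose Cq k := [set u : R | u <= q k].
have measurable_le c : measurable [set u : R | u <= c].
  by apply: measurable_downset => x y yx; exact: le_trans yx.
have goodUE : [set w | forall k : 'I_n, ostat (fun i => U i w) k.+1 <= b k.+1] =
              count_event (fun i => U i : OmegaU -> R) Cb.
  have memCb w k : count (fun i => U i w \in Cb k) (enum 'I_n) =
                   count (fun i => U i w <= b k) (enum 'I_n).
    by apply: eq_count => i; apply/idP/idP; rewrite inE.
  apply/seteqP; split => w Uw k; have := Uw k;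
    by rewrite ostat_le_count ?ltn_ord // memCb.
have Cb_mono i j : (0 < i <= j)%N -> (j <= n)%N -> Cb i `<=` Cb j.
  by move=> /andP[_ ij] jn u /le_trans; apply; apply: b_mono; rewrite ij ltnW.
have Cq_mono i j : (0 < i <= j)%N -> (j <= n)%N -> Cq i `<=` Cq j.
  by move=> ij jn u /le_trans; apply; exact: q_mono.
have XU i k : (0 < k <= n)%N -> P (X i @^-1` C k) = Q (U i @^-1` Cq k).
  move=> _; rewrite (lawX _ (measurable_C k)) (lawU _ (measurable_le _)).
  by rewrite -qE (uniform_prob_le (q01 k)).
rewrite goodUE (probability_count_event_eq C_mono Cq_mono measurable_C
  (fun k => measurable_le (q k)) indX indU XU).
apply: le_measure; rewrite ?inE.
- exact: (measurable_count_event Cb_mono (fun k => measurable_le (b k)) U).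
- exact: (measurable_count_event Cq_mono (fun k => measurable_le (q k)) U).
- apply: count_event_sub => k u; rewrite /Cb /Cq /= => /le_trans; apply.
  by apply: b_le_q; exact: ltnW (ltn_ord k).
Qed.

End conformal.

Theorem theorem4 (R : realType) (d n : nat) (delta : R) (b : nat -> R)
  (dO : measure_display) (Omega : measurableType dO) (P : probability Omega R)
  (PX : probability (d.-tuple R) R) (s : d.-tuple R -> R)
  (X : 'I_n -> {RV P >-> d.-tuple R})
  (dU : measure_display) (OmegaU : measurableType dU) (Q : probability OmegaU R)
  (U : 'I_n -> {RV Q >-> R}) :
  0 < delta < 1 ->
  measurable_fun setT s ->
  (forall i A, measurable A -> P (X i @^-1` A) = PX A) ->
  mutual_indep P (fun i => (X i : Omega -> d.-tuple R)) ->
  (forall i A, measurable A -> Q (U i @^-1` A) = uniform_prob (@ltr01 R) A) ->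
  mutual_indep Q (fun i => (U i : OmegaU -> R)) ->
  b 0%N = 0 -> b n.+1 = 1 ->
  (forall k, (k <= n)%N -> b k <= b k.+1) ->
  let good_U := [set w | forall k : 'I_n, ostat (fun i => U i w) k.+1 <= b k.+1] in
  ((1 - delta)%:E <= Q good_U)%E ->
  exists E : set Omega, [/\ measurable E, ((1 - delta)%:E <= P E)%E &
    forall w, E w -> forall t, 0 < t < 1 ->
      let A := [set x | hfun n b (umarg s (fun i => X i w) x) <= t] in
      (PX A <= t%:E)%E].
Proof.
move=> _ ms lawX indX lawU indU b0 bn1 b_step good_U HQ.
exists (count_event (fun i => X i : Omega -> d.-tuple R)
                     (fun k => s @^-1` ltail PX s (b k))); split.
- exact: measurable_ltail_count_event.
- exact: le_trans HQ (probability_ltail_count_event_ge ms b_step bn1 lawX indX lawU indU).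
- move=> w Ew t t01 /=.
  have -> : [set x | hfun n b (umarg s (fun i => X i w) x) <= t] =
    [set x | b (1 + count (fun i => (s (X i w) <= s x)%R) (enum 'I_n))%N <= t].
    by apply/seteqP; split => x /=; rewrite hfun_umarg.
  exact: (coverage_le ms b_step b0 bn1 t01 Ew).
Qed.
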